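(* Let $R$ be an integral domain and $B=R[X_1,\dots,X_n]$ the polynomial ring with standard grading $B=\bigoplus_{i\ge0}B_i$ ($B_i$ the homogeneous polynomials of degree $i$, $B_0=R$). Let $A$ be a graded $R$-subalgebra of $B$ (i.e. $A=\bigoplus_{i\ge 0}(A\cap B_i)$), and suppose there is a retraction $\pi:B\to A$ with $\pi(B_+)\subseteq B_+$, where $B_+=\bigoplus_{i\ge1}B_i$. Then there is a finitely generated projective $R$-submodule $M$ of the free module $B_1=RX_1\oplus\cdots\oplus RX_n$ (namely a direct summand of $B_1$) such that $A$ is the $R$-subalgebra of $B$ generated by $M$ and $A\cong\operatorname{Sym}_R(M)$.
   Context: A retraction $\pi:B\to A$ is a ring homomorphism onto the subring $A$ which restricts to the identity on $A$ (equivalently an idempotent endomorphism of $B$ with image $A$); $\pi$ need not be graded. *)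

From HB Require Import structures.
From mathcomp Require Import all_boot all_algebra.
From mathcomp Require Import mpoly.
Set Implicit Arguments. Unset Strict Implicit. Unset Printing Implicit Defensive.
Import GRing.Theory.
Local Open Scope ring_scope.

Section Defs.
Variables (R : idomainType) (n : nat).
Local Notation B := {mpoly R[n]}.

(* S is an R-subalgebra of B: contains R = B_0 (constants), closed under + and *.
   (Closure under -, and R-scaling, follows: -p = (-1)%:MP * p, c *: p = c%:MP * p.) *)
Definition is_subalg (S : B -> Prop) : Prop :=
  (forall c : R, S c%:MP) /\
  (forall p q, S p -> S q -> S (p + q)) /\
  (forall p q, S p -> S q -> S (p * q)).

Definition homog_comp (d : nat) (p : B) : B :=
  \sum_(m <- msupp p | mdeg m == d) p@_m *: 'X_[m].

(* S is graded: S = (+)_i (S cap B_i), i.e. homogeneous components of elements of S lie in S. *)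
Definition is_graded (S : B -> Prop) : Prop :=
  forall (p : B) (d : nat), S p -> S (homog_comp d p).

Definition B_plus (p : B) : Prop := p@_(0%MM) = 0.

Definition is_submodule (S : B -> Prop) : Prop :=
  S 0 /\ (forall p q, S p -> S q -> S (p + q)) /\ (forall (c : R) p, S p -> S (c *: p)).

Definition direct_summand_B1 (M : B -> Prop) : Prop :=
  is_submodule M /\ (forall p, M p -> p \is 1.-homog) /\
  exists N : B -> Prop,
    is_submodule N /\ (forall p, N p -> p \is 1.-homog) /\
    (forall p, M p -> N p -> p = 0) /\
    (forall p, p \is 1.-homog -> exists u v, M u /\ N v /\ p = u + v).

Definition fin_gen_module (M : B -> Prop) : Prop :=
  exists s : seq B, (forall x, x \in s -> M x) /\
    (forall p, M p -> exists c : 'I_(size s) -> R, p = \sum_(i < size s) c i *: s`_i).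

Definition gen_subalg (M : B -> Prop) (p : B) : Prop :=
  forall S : B -> Prop, is_subalg S -> (forall m, M m -> S m) -> S p.

Definition alg_hom_on (A : B -> Prop) (C : comAlgType R) (g : B -> C) : Prop :=
  g 1 = 1 /\
  (forall a b, A a -> A b -> g (a + b) = g a + g b) /\
  (forall a b, A a -> A b -> g (a * b) = g a * g b) /\
  (forall (c : R) a, A a -> g (c *: a) = c *: g a).

(* (A, inclusion M -> A) is a symmetric algebra Sym_R(M): universal property
   w.r.t. R-linear maps from M into commutative R-algebras. This characterizes
   A ≅ Sym_R(M) via the canonical map Sym_R(M) -> A induced by M ⊆ A. *)
Definition is_sym_alg_of (A M : B -> Prop) : Prop :=
  (forall m, M m -> A m) /\
  forall (C : comAlgType R) (f : B -> C),
    (forall u v, M u -> M v -> f (u + v) = f u + f v) ->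
    (forall (c : R) u, M u -> f (c *: u) = c *: f u) ->
    exists g : B -> C,
      alg_hom_on A g /\ (forall u, M u -> g u = f u) /\
      (forall g' : B -> C, alg_hom_on A g' -> (forall u, M u -> g' u = f u) ->
         forall a, A a -> g' a = g a).

End Defs.

From HB Require Import structures.
From mathcomp Require Import all_boot all_algebra.
From mathcomp Require Import mpoly.
Set Implicit Arguments. Unset Strict Implicit. Unset Printing Implicit Defensive.
Import GRing.Theory.
Local Open Scope ring_scope.

(* Let Lambda, the linear part of pi, be the R-algebra endomorphism of B
   sending X_i to the degree-one component of pi(X_i). Since pi(X_i) lies in
   B_+, it agrees with Lambda(X_i) up to terms of degree >= 2, so for p
   homogeneous of degree d the degree-d component of pi(p) is Lambda(p). As A
   is graded and fixed by pi, Lambda fixes every homogeneous element of A,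
   hence all of A: A is the image of Lambda and is generated by
   M = A cap B_1 = Lambda(B_1). On B_1, Lambda is a projection onto M, whose
   kernel is a complement of M; and since every a in A is the polynomial
   Lambda(a) in the elements Lambda(X_i) of M, an R-linear map on M extends to
   A uniquely, by evaluating X_i at the images of Lambda(X_i). *)

Lemma homog_compE (R : idomainType) n d (p : {mpoly R[n]}) :
  homog_comp d p = pihomog mdeg d p.
Proof. by []. Qed.

Section HomogeneousComponents.
Variables (R : nzRingType) (n : nat).
Implicit Types (p q l : {mpoly R[n]}) (m : 'X_{1..n}).

Lemma mcoeff_pihomog (mf : measure n) d p m :
  (pihomog mf d p)@_m = if mf m == d then p@_m else 0.
Proof.
rewrite pihomogE raddf_sum /=.
under eq_bigr do rewrite mcoeffZ mcoeffX.
have [mp | mp] := boolP (m \in msupp p).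
  rewrite big_mkcond (bigD1_seq m) ?msupp_uniq //= eqxx mulr1 big1 ?addr0 //.
  by move=> m' /negbTE m'm; case: ifP => // _; rewrite m'm mulr0.
rewrite big1_seq; first by case: ifP => // _; rewrite (memN_msupp_eq0 mp).
by move=> m' /andP[_ m'p]; case: eqP => [em|]; [rewrite -em m'p in mp | rewrite mulr0].
Qed.

Lemma dhomog1E p : p \is 1.-homog -> p = \sum_(i < n) p@_U_(i) *: 'X_i.
Proof.
move=> hp; apply/mpolyP => m; rewrite raddf_sum /=.
under eq_bigr do rewrite mcoeffZ mcoeffX.
have [/mdeg1P [i /eqP ->] | hm] := boolP (mdeg m == 1%N).
  rewrite (bigD1 i) //= eqxx mulr1 big1 ?addr0 // => j ji.
  by rewrite eq_mnm1 (negbTE ji) mulr0.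
rewrite (dhomog_nemf_coeff hp hm) big1 // => j _.
by case: eqP => [ej|]; [move: hm; rewrite -ej mdeg1 | rewrite mulr0].
Qed.

Lemma mmap_dhomog1 (S : nzRingType) (f : {rmorphism R -> S}) (h : 'I_n -> S) p :
  p \is 1.-homog -> mmap f h p = \sum_(i < n) f p@_U_(i) * h i.
Proof.
move=> hp; rewrite {1}(dhomog1E hp) raddf_sum /=.
by apply: eq_bigr => i _; rewrite mmapZ mmapX mmap1U.
Qed.

Lemma eq_mmap (S : nzRingType) (f : R -> S) (h1 h2 : 'I_n -> S) :
  h1 =1 h2 -> mmap f h1 =1 mmap f h2.
Proof. by move=> eh p; apply: eq_bigr => m _; rewrite (mmap1_eq _ eh). Qed.

Definition Bge k p := forall m, m \in msupp p -> (k <= mdeg m)%N.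

Lemma Bge0 k : Bge k 0.
Proof. by move=> m; rewrite msupp0. Qed.

Lemma BgeD k p q : Bge k p -> Bge k q -> Bge k (p + q).
Proof. by move=> hp hq m /msuppD_le; rewrite mem_cat => /orP[/hp|/hq]. Qed.

Lemma BgeW k k' p : (k <= k')%N -> Bge k' p -> Bge k p.
Proof. by move=> kk' hp m /hp; apply: leq_trans. Qed.

Lemma BgeM k k' p q : Bge k p -> Bge k' q -> Bge (k + k') (p * q).
Proof.
move=> hp hq m /msuppM_le /allpairsP [[m1 m2] /= [/hp h1 /hq h2 ->]].
by rewrite mdegD leq_add.
Qed.

Lemma dhomog_Bge d p : p \is d.-homog -> Bge d p.
Proof. by move=> /dhomogP hp m /hp ->. Qed.

Lemma pihomog_Bge d k p : (d < k)%N -> Bge k p -> pihomog mdeg d p = 0.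
Proof.
move=> dk hp; rewrite pihomogE big1_seq // => m /andP[/eqP md /hp].
by rewrite md leqNgt dk.
Qed.

Definition initial_form d q l := l \is d.-homog /\ Bge d.+1 (q - l).

Lemma initial_form_pihomog d q l : initial_form d q l -> pihomog mdeg d q = l.
Proof.
move=> [hl hql]; rewrite -[q](subrK l) pihomogD (pihomog_Bge _ hql) //.
by rewrite add0r pihomog_dE.
Qed.

Lemma initial_form1 : initial_form 0 1 1.
Proof. by split; [exact: dhomog1 | rewrite subrr; exact: Bge0]. Qed.

Lemma initial_formM d e q l q' l' :
  initial_form d q l -> initial_form e q' l' ->
  initial_form (d + e) (q * q') (l * l').
Proof.
move=> [hl hq] [hl' hq']; split; first exact: dhomogM.
have -> : q * q' - l * l' = (q - l) * (l' + (q' - l')) + l * (q' - l').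
  by rewrite [l' + _]addrC subrK mulrBl mulrBr addrA subrK.
apply: BgeD; last by rewrite -addnS; apply: BgeM => //; apply: dhomog_Bge.
apply: (@BgeM d.+1 e) => //; apply: BgeD; first exact: dhomog_Bge.
exact: BgeW hq'.
Qed.

Lemma initial_formX d q l k :
  initial_form d q l -> initial_form (d * k) (q ^+ k) (l ^+ k).
Proof.
move=> h; elim: k => [|k ih]; first by rewrite muln0 !expr0; exact: initial_form1.
by rewrite !exprS mulnS; apply: initial_formM.
Qed.

Lemma initial_form_prod (I : Type) (r : seq I) (ds : I -> nat) (qs ls : I -> {mpoly R[n]}) :
  (forall i, initial_form (ds i) (qs i) (ls i)) ->
  initial_form (\sum_(i <- r) ds i) (\prod_(i <- r) qs i) (\prod_(i <- r) ls i).
Proof.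
move=> h; elim: r => [|i r ih]; first by rewrite !big_nil; exact: initial_form1.
by rewrite !big_cons; apply: initial_formM.
Qed.

Lemma initial_form_linear_part q :
  q@_0%MM = 0 -> initial_form 1 q (pihomog mdeg 1 q).
Proof.
move=> q0; split; first exact: pihomogP.
move=> m; rewrite mcoeff_msupp mcoeffB mcoeff_pihomog.
case: ltnP => // hm; case: (mdeg m =P 1%N) => [_|hm1]; first by rewrite subrr eqxx.
have : mdeg m == 0%N by case: (mdeg m) hm hm1 => [|[|]].
by rewrite mdeg_eq0 => /eqP ->; rewrite q0 subr0 eqxx.
Qed.

End HomogeneousComponents.

Section SubalgebrasAndHomomorphisms.
Variables (R : idomainType) (n : nat).
Implicit Types (S A : {mpoly R[n]} -> Prop) (p q : {mpoly R[n]}).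

Lemma subalg0 S : is_subalg S -> S 0.
Proof. by move=> [SC _]; rewrite -mpolyC0. Qed.

Lemma subalg1 S : is_subalg S -> S 1.
Proof. by move=> [SC _]; rewrite -mpolyC1. Qed.

Lemma subalgZ S c p : is_subalg S -> S p -> S (c *: p).
Proof. by move=> [SC [_ SM]] Sp; rewrite -mul_mpolyC; apply: SM. Qed.

Lemma subalgX S p k : is_subalg S -> S p -> S (p ^+ k).
Proof.
move=> S_sub Sp; elim: k => [|k ih]; first by rewrite expr0; exact: subalg1.
by rewrite exprS; apply: S_sub.2.2.
Qed.

Lemma subalg_mmap S (h : 'I_n -> {mpoly R[n]}) q :
  is_subalg S -> (forall i, S (h i)) -> S (mmap (@mpolyC n R) h q).
Proof.
move=> S_sub Sh; apply: big_ind => [|x y|m _]; first exact: subalg0.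
  exact: S_sub.2.1.
apply: S_sub.2.2; first exact: S_sub.1.
apply: big_ind => [|x y|i _]; [exact: subalg1 | exact: S_sub.2.2 | exact: subalgX].
Qed.

Lemma mmap_alg_hom_on A (C : comAlgType R) (h : 'I_n -> C) :
  alg_hom_on A (mmap (in_alg C) h).
Proof.
split; first exact: rmorph1.
split; first by move=> p q _ _; exact: rmorphD.
split; first by move=> p q _ _; exact: rmorphM.
by move=> c p _; rewrite mmapZ mulr_algl.
Qed.

Section AlgHomOn.
Variables (A : {mpoly R[n]} -> Prop) (C : comAlgType R) (g : {mpoly R[n]} -> C).
Hypotheses (A_subalg : is_subalg A) (g_hom : alg_hom_on A g).

Lemma alg_hom_on0 : g 0 = 0.
Proof.
have [_ [_ [_ gZ]]] := g_hom.
by have := gZ 0 1 (subalg1 A_subalg); rewrite !scale0r.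
Qed.

Lemma alg_hom_onX p k : A p -> g (p ^+ k) = g p ^+ k.
Proof.
have [g1 [_ [gM _]]] := g_hom.
move=> Ap; elim: k => [|k ih]; first by rewrite !expr0.
by rewrite !exprS gM ?ih //; exact: subalgX.
Qed.

Lemma alg_hom_on_mmap (h : 'I_n -> {mpoly R[n]}) q :
  (forall i, A (h i)) ->
  g (mmap (@mpolyC n R) h q) = mmap (in_alg C) (g \o h) q.
Proof.
have [g1 [gD [gM gZ]]] := g_hom; move=> Ah.
pose K x y := A x /\ g x = y.
have K_mul x1 y1 x2 y2 : K x1 y1 -> K x2 y2 -> K (x1 * x2) (y1 * y2).
  by move=> [Ax1 <-] [Ax2 <-]; split; [exact: A_subalg.2.2 | exact: gM].
suff [] : K (mmap (@mpolyC n R) h q) (mmap (in_alg C) (g \o h) q) by [].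
apply: big_ind2 => [|x1 y1 x2 y2 [Ax1 <-] [Ax2 <-]|m _].
- by split; [exact: subalg0 | exact: alg_hom_on0].
- by split; [exact: A_subalg.2.1 | exact: gD].
apply: (K_mul).
  split; first exact: A_subalg.1.
  by rewrite -[_%:MP]mulr1 mul_mpolyC gZ ?g1 //; exact: subalg1.
apply: big_ind2 => [|x1 y1 x2 y2|i _]; [by split; [exact: subalg1|] | exact: (K_mul)|].
by split; [exact: subalgX | rewrite alg_hom_onX].
Qed.

End AlgHomOn.

Lemma submodule_linear_sum (M : {mpoly R[n]} -> Prop) (V : lmodType R)
    (f : {mpoly R[n]} -> V) (I : Type) (r : seq I) (c : I -> R) (v : I -> {mpoly R[n]}) :
  is_submodule M ->
  (forall u w, M u -> M w -> f (u + w) = f u + f w) ->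
  (forall a u, M u -> f (a *: u) = a *: f u) ->
  (forall i, M (v i)) ->
  f (\sum_(i <- r) c i *: v i) = \sum_(i <- r) c i *: f (v i).
Proof.
move=> [M0 [MD MZ]] fD fZ Mv.
pose K x y := M x /\ f x = y.
suff [] : K (\sum_(i <- r) c i *: v i) (\sum_(i <- r) c i *: f (v i)) by [].
apply: big_ind2 => [|x1 y1 x2 y2 [Mx1 <-] [Mx2 <-]|i _].
- by split=> //; have := fZ 0 0 M0; rewrite !scale0r.
- by split; [exact: MD | exact: fD].
by split; [exact: MZ | exact: fZ].
Qed.

End SubalgebrasAndHomomorphisms.

Section LinearPart.
Variables (R : idomainType) (n : nat) (pi : {rmorphism {mpoly R[n]} -> {mpoly R[n]}}).
Hypothesis pi_C : forall c : R, pi c%:MP = c%:MP.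
Hypothesis pi_Bplus : forall p, B_plus p -> B_plus (pi p).

Definition linear_partX (i : 'I_n) := pihomog mdeg 1 (pi 'X_i).
Local Notation Lambda := (mmap (@mpolyC n R) linear_partX).

Lemma pi_scale c p : pi (c *: p) = c *: pi p.
Proof. by rewrite -mul_mpolyC rmorphM pi_C mul_mpolyC. Qed.

Lemma initial_form_pi_monomial m :
  initial_form (mdeg m) (pi 'X_[m]) (Lambda 'X_[m]).
Proof.
rewrite mmapX /mmap1 mpolyXE_id rmorph_prod mdegE.
apply: initial_form_prod => i; rewrite rmorphXn -[X in initial_form X]mul1n.
apply: initial_formX; apply: initial_form_linear_part; apply: pi_Bplus.
by rewrite /B_plus mcoeffX; case: eqP => // e; have := mdeg1 i; rewrite e mdeg0.
Qed.

Lemma pihomog_pi_dhomog d p :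
  p \is d.-homog -> pihomog mdeg d (pi p) = Lambda p.
Proof.
move=> /dhomogP hp; rewrite [p]mpolyE rmorph_sum !raddf_sum /=.
apply: eq_big_seq => m /hp <-.
rewrite pi_scale linearZ /= (initial_form_pihomog (initial_form_pi_monomial m)).
by rewrite mmapZ mul_mpolyC.
Qed.

End LinearPart.

Section Retraction.
Variables (R : idomainType) (n : nat) (A : {mpoly R[n]} -> Prop).
Variable pi : {rmorphism {mpoly R[n]} -> {mpoly R[n]}}.
Hypotheses (A_subalg : is_subalg A) (A_graded : is_graded A).
Hypotheses (pi_into_A : forall p, A (pi p)) (pi_fixes_A : forall a, A a -> pi a = a).
Hypothesis pi_Bplus : forall p, B_plus p -> B_plus (pi p).

Let pi_C c : pi c%:MP = c%:MP := pi_fixes_A (proj1 A_subalg c).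
Local Notation Lambda := (mmap (@mpolyC n R) (linear_partX pi)).

Definition A_deg1 p := A p /\ p \is 1.-homog.

Lemma pihomog_in_A d p : A p -> A (pihomog mdeg d p).
Proof. by rewrite -homog_compE; apply: A_graded. Qed.

Lemma linear_partX_deg1 i : A_deg1 (linear_partX pi i).
Proof. by split; [exact: pihomog_in_A | exact: pihomogP]. Qed.

Lemma linear_part_fixes_A a : A a -> Lambda a = a.
Proof.
move=> Aa; have a_sum := pihomog_partitionE (leqnn (mmeasure mdeg a)).
rewrite [in LHS]a_sum [in RHS]a_sum raddf_sum /=; apply: eq_bigr => d _.
rewrite -(pihomog_pi_dhomog pi_C pi_Bplus (pihomogP mdeg d a)).
by rewrite pi_fixes_A ?pihomog_id //; exact: pihomog_in_A.
Qed.

Lemma linear_part_deg1 p : p \is 1.-homog -> A_deg1 (Lambda p).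
Proof.
move=> hp; rewrite -(pihomog_pi_dhomog pi_C pi_Bplus hp).
by split; [exact: pihomog_in_A | exact: pihomogP].
Qed.

Lemma A_deg1_submodule : is_submodule A_deg1.
Proof.
split; first by split; [exact: subalg0 | exact: dhomog0].
split; first by move=> p q [Ap hp] [Aq hq]; split; [exact: A_subalg.2.1 | exact: dhomogD].
by move=> c p [Ap hp]; split; [exact: subalgZ | exact: dhomogZ].
Qed.

Lemma A_deg1_direct_summand : direct_summand_B1 A_deg1.
Proof.
split; first exact: A_deg1_submodule.
split; first by move=> p [].
exists (fun p => p \is 1.-homog /\ Lambda p = 0); split.
  split; first by split; [exact: dhomog0 | exact: raddf0].
  split; first by move=> p q [hp lp] [hq lq]; split; [exact: dhomogD | rewrite raddfD /= lp lq addr0].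
  by move=> c p [hp lp]; split; [exact: dhomogZ | rewrite mmapZ lp mulr0].
split; first by move=> p [].
split; first by move=> p [Ap _] [_ lp]; rewrite -(linear_part_fixes_A Ap).
move=> p hp; have [ALp hLp] := linear_part_deg1 hp.
exists (Lambda p), (p - Lambda p); split=> //; split; last by rewrite addrC subrK.
by split; [rewrite rpredB | rewrite raddfB /= (linear_part_fixes_A ALp) subrr].
Qed.

Lemma A_deg1_spanned_by_linear_partX u :
  A_deg1 u -> u = \sum_(i < n) u@_U_(i) *: linear_partX pi i.
Proof.
move=> [Au hu]; rewrite -{1}(linear_part_fixes_A Au) (mmap_dhomog1 _ _ hu).
by under eq_bigr do rewrite mul_mpolyC.
Qed.

Lemma A_deg1_fin_gen : fin_gen_module A_deg1.
Proof.
exists [seq linear_partX pi i | i <- enum 'I_n]; split.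
  by move=> x /mapP [i _ ->]; exact: linear_partX_deg1.
move=> u /A_deg1_spanned_by_linear_partX ->; rewrite size_map size_enum_ord.
exists (fun i => u@_U_(i)).
by apply: eq_bigr => i _; rewrite (nth_map i) ?size_enum_ord // nth_ord_enum.
Qed.

Lemma A_generated_by_deg1 p : A p <-> gen_subalg A_deg1 p.
Proof.
split=> [Ap S S_subalg deg1_S | gen_p]; last by apply: gen_p => // u [].
rewrite -(linear_part_fixes_A Ap); apply: subalg_mmap => // i.
exact/deg1_S/linear_partX_deg1.
Qed.

Lemma A_sym_alg_of_deg1 : is_sym_alg_of A A_deg1.
Proof.
split=> [u [] // | C f fD fZ].
pose g := mmap (in_alg C) (f \o linear_partX pi).
have g_f u : A_deg1 u -> g u = f u.
  move=> u1; rewrite [in RHS](A_deg1_spanned_by_linear_partX u1).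
  rewrite (submodule_linear_sum _ _ A_deg1_submodule fD fZ linear_partX_deg1).
  rewrite /g (mmap_dhomog1 _ _ u1.2); apply: eq_bigr => i _.
  exact: mulr_algl.
exists g; split; first exact: mmap_alg_hom_on.
split=> // g' g'_hom g'_f a Aa.
rewrite -[in LHS](linear_part_fixes_A Aa).
rewrite (alg_hom_on_mmap A_subalg g'_hom a (fun i => (linear_partX_deg1 i).1)).
by apply: eq_mmap => i /=; rewrite g'_f //; exact: linear_partX_deg1.
Qed.

End Retraction.

Theorem theorem5p13 (R : idomainType) (n : nat) (A : {mpoly R[n]} -> Prop)
    (pi : {rmorphism {mpoly R[n]} -> {mpoly R[n]}}) :
  is_subalg A -> is_graded A ->
  (forall p, A (pi p)) -> (forall a, A a -> pi a = a) ->
  (forall p, B_plus p -> B_plus (pi p)) ->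
  exists M : {mpoly R[n]} -> Prop,
    direct_summand_B1 M /\ fin_gen_module M /\
    (forall p, A p <-> gen_subalg M p) /\
    is_sym_alg_of A M.
Proof.
move=> A_subalg A_graded pi_into_A pi_fixes_A pi_Bplus.
exists (A_deg1 A); split.
  exact: (A_deg1_direct_summand A_subalg A_graded pi_into_A pi_fixes_A pi_Bplus).
split; first exact: (A_deg1_fin_gen A_subalg A_graded pi_into_A pi_fixes_A pi_Bplus).
split; first exact: (A_generated_by_deg1 A_subalg A_graded pi_into_A pi_fixes_A pi_Bplus).
exact: (A_sym_alg_of_deg1 A_subalg A_graded pi_into_A pi_fixes_A pi_Bplus).
Qed.
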